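(* Let $T\in\mathbb{N}$, and let $X=\{X_t\}_{t=0}^{T}$ be a state process valued in $\mathcal{X}\subseteq\mathbb{R}^d$ with initial state $X_0\in\mathring{\mathcal{X}}_R$, evolving as $X_{t+1}=H\big(K(X_t,a_t),\varepsilon_{t+1}\big)$ for $t=0,\dots,T-1$, where $\{a_t\}_{t=0}^{T-1}$ is an arbitrary $\{\mathcal{F}_t\}$-adapted $\mathbb{R}^p$-valued process. Let the auxiliary process $X^R$ be defined by $X_0^R=X_0$ and $$X_t^R=X_t\,\mathbb{I}_{\{\tau^R>t\}}+\mathcal{Q}\big(X_{\tau^R\wedge t}\big)\,\mathbb{I}_{\{\tau^R\le t\}},\qquad t=1,\dots,T.$$ Then $X^R$ satisfies, for $t=0,1,\dots,T-1$, $$X_{t+1}^R=X_t^R\,\mathbb{I}_{\{X_t^R\in\partial\mathcal{X}_R\}}+\tilde H\big(K(X_t^R,a_t),\varepsilon_{t+1}\big)\,\mathbb{I}_{\{X_t^R\in\mathring{\mathcal{X}}_R\}},$$ where $\tilde H(k,e)=\mathcal{Q}(H(k,e))$ if $H(k,e)\notin\mathring{\mathcal{X}}_R$ and $\tilde H(k,e)=H(k,e)$ otherwise.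
   Context: Time points are $\mathcal{T}=\{0,1,\dots,T\}$ on a probability space $(\Omega,\mathcal{F},\mathbb{P})$ with filtration $\{\mathcal{F}_t\}_{t\in\mathcal{T}}$. $\varepsilon_1,\dots,\varepsilon_T$ are independent $\mathbb{R}^q$-valued random variables ($\varepsilon_{t+1}$ being $\mathcal{F}_{t+1}$-measurable), $K:\mathbb{R}^{d+p}\to\mathbb{R}^r$ and $H:\mathbb{R}^{r+q}\to\mathbb{R}^d$ are measurable. $\mathcal{X}_R\subseteq\mathcal{X}$ is a bounded set (depending on a truncation parameter $R$) with interior $\mathring{\mathcal{X}}_R$ and boundary $\partial\mathcal{X}_R$, whose closure $\mathrm{cl}(\mathcal{X}_R)$ is compact and strictly convex. $\mathcal{Q}(x)=\arg\inf_{y\in\mathrm{cl}(\mathcal{X}_R)}\|y-x\|$ is the Euclidean nearest-point projection onto $\mathrm{cl}(\mathcal{X}_R)$ (unique, and lying in $\partial\mathcal{X}_R$ when $x\notin\mathring{\mathcal{X}}_R$). The stopping time is $\tau^R=\inf\{t\in\mathcal{T}: X_t\notin\mathring{\mathcal{X}}_R\}$, with $\tau^R=\infty$ if $X_t\in\mathring{\mathcal{X}}_R$ for all $t\in\mathcal{T}$. *)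

From HB Require Import structures.
From mathcomp Require Import all_boot all_order all_algebra.
From mathcomp Require Import all_classical all_reals all_analysis.
Set Implicit Arguments. Unset Strict Implicit. Unset Printing Implicit Defensive.
Import Order.TTheory GRing.Theory Num.Theory.
Import numFieldNormedType.Exports.
Local Open Scope classical_set_scope.
Local Open Scope ring_scope.

(* R^n is represented by row vectors 'rV[R]_n (with the library topology,
   which is the usual product topology). *)

Definition eucl_norm (R : realType) (n : nat) (v : 'rV[R]_n) : R :=
  Num.sqrt (\sum_(i < n) v ord0 i ^+ 2).

Definition boundary (R : realType) (n : nat) (A : set 'rV[R]_n) : set 'rV[R]_n :=
  closure A `\` interior A.

Definition bounded_eucl (R : realType) (n : nat) (A : set 'rV[R]_n) : Prop :=
  exists M : R, forall x, A x -> eucl_norm x <= M.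

Definition strictly_convex (R : realType) (n : nat) (C : set 'rV[R]_n) : Prop :=
  forall x y, C x -> C y -> x <> y ->
    forall l : R, 0 < l < 1 -> interior C (l *: x + (1 - l) *: y).

(* Euclidean nearest-point projection onto cl(XR):
   Q(x) = arg inf_{y in cl(XR)} |y - x| (a chosen minimiser; it is unique
   when cl(XR) is nonempty, compact and strictly convex). *)
Definition proj_cl (R : realType) (n : nat) (XR : set 'rV[R]_n) (x : 'rV[R]_n)
  : 'rV[R]_n :=
  xget 0 [set y | closure XR y /\
                  forall z, closure XR z -> eucl_norm (y - x) <= eucl_norm (z - x)].

(* Stopping time tau^R = inf {t in {0..T} : X_t not in interior XR},
   None encodes +infinity. *)
Definition tauR (R : realType) (n : nat) (XR : set 'rV[R]_n) (T : nat)
  (x : nat -> 'rV[R]_n) : option nat :=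
  match [seq t <- iota 0 T.+1 | `[< ~ interior XR (x t) >]] with
  | t :: _ => Some t
  | [::] => None
  end.

Definition tau_gt (tau : option nat) (t : nat) : bool :=
  if tau is Some k then (t < k)%N else true.

Definition tau_min (tau : option nat) (t : nat) : nat :=
  if tau is Some k then minn k t else t.

Definition ind (R : realType) (n : nat) (P : Prop) (v : 'rV[R]_n) : 'rV[R]_n :=
  if `[< P >] then v else 0.

Definition XRproc (R : realType) (n : nat) (XR : set 'rV[R]_n) (T : nat)
  (x : nat -> 'rV[R]_n) (t : nat) : 'rV[R]_n :=
  let tau := tauR XR T x in
  if t == 0%N then x 0%N
  else ind (tau_gt tau t) (x t)
     + ind (~~ tau_gt tau t) (proj_cl XR (x (tau_min tau t))).

Definition Htilde (R : realType) (d r q : nat) (XR : set 'rV[R]_d)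
  (H : 'rV[R]_(r + q) -> 'rV[R]_d) (k : 'rV[R]_r) (e : 'rV[R]_q) : 'rV[R]_d :=
  if `[< interior XR (H (row_mx k e)) >] then H (row_mx k e)
  else proj_cl XR (H (row_mx k e)).

From HB Require Import structures.
From mathcomp Require Import all_boot all_order all_algebra.
From mathcomp Require Import all_classical all_reals all_analysis.
From mathcomp Require Import lra.
Set Implicit Arguments. Unset Strict Implicit. Unset Printing Implicit Defensive.
Import Order.TTheory GRing.Theory Num.Theory.
Import numFieldNormedType.Exports.
Local Open Scope classical_set_scope.
Local Open Scope ring_scope.

(* Before the stopping time tau the auxiliary process coincides with X and
   stays in the interior, so one step of it is one step of the dynamics,
   projected if it leaves the interior.  From tau on it is frozen at
   Q(X_tau), which lies on the boundary: Q(X_tau) is in the closure, and a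
   nearest point y of a set to a point x <> y cannot be interior, since
   moving from y slightly towards x would bring it closer to x. *)

Lemma filter_iota_head (P : pred nat) m n k s :
  [seq t <- iota m n | P t] = k :: s ->
  [/\ (m <= k < m + n)%N, P k & forall j, (m <= j < k)%N -> ~~ P j].
Proof.
elim: n m => [|n IHn] m //=.
case: ifP => Pm.
  case=> <- _; split=> //; first by rewrite leqnn addnS ltnS leq_addr.
  by move=> j; rewrite leqNgt andbC => /andP[->].
move=> /IHn[/andP[lemk ltkn] Pk before_k]; split=> //.
  by rewrite addnS -addSn ltkn ltnW.
move=> j /andP[lemj ltjk]; have [<-|nemj] := eqVneq m j; first by rewrite Pm.
by apply: before_k; rewrite ltjk andbT ltn_neqAle nemj lemj.
Qed.

Section StoppingTime.
Variables (R : realType) (n : nat) (XR : set 'rV[R]_n) (T : nat).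
Variable x : nat -> 'rV[R]_n.

Lemma tauR_Some k : tauR XR T x = Some k ->
  [/\ (k <= T)%N, ~ interior XR (x k) & forall j, (j < k)%N -> interior XR (x j)].
Proof.
rewrite /tauR; case E : [seq _ <- _ | _] => [|k' s] //= [<-].
have [/andP[_ le_kT] /asboolP notint_k before_k] := filter_iota_head E.
split=> // j /before_k /asboolPn; exact: contrapT.
Qed.

Lemma tauR_None : tauR XR T x = None -> forall j, (j <= T)%N -> interior XR (x j).
Proof.
rewrite /tauR; case E : [seq _ <- _ | _] => // _ j leJT.
have : ~~ has (fun t => `[< ~ interior XR (x t) >]) (iota 0 T.+1).
  by rewrite has_filter E.
move/hasPn => /(_ j); rewrite mem_iota add0n ltnS leJT => /(_ isT).
by move/asboolPn/contrapT.
Qed.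

Lemma interior_before_tauR s :
  tau_gt (tauR XR T x) s -> (s <= T)%N -> interior XR (x s).
Proof.
case E : (tauR XR T x) => [k|] /= ltsk leST; last exact: tauR_None.
by have [_ _ before_k] := tauR_Some E; exact: before_k.
Qed.

End StoppingTime.

Section EuclideanNorm.
Variables (R : realType) (n : nat).

Lemma eucl_norm_ge0 (v : 'rV[R]_n) : 0 <= eucl_norm v.
Proof. exact: sqrtr_ge0. Qed.

Lemma eucl_norm_eq0 (v : 'rV[R]_n) : eucl_norm v = 0 -> v = 0.
Proof.
move/eqP; rewrite /eucl_norm sqrtr_eq0 => sum_le0.
have sum_eq0 : \sum_(i < n) v ord0 i ^+ 2 = 0.
  by apply/eqP; rewrite eq_le sum_le0 sumr_ge0 // => i _; exact: sqr_ge0.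
apply/rowP => j; rewrite mxE.
have sqr_vj_eq0 : v ord0 j ^+ 2 = 0.
  by apply: (psumr_eq0P (fun i (_ : true) => sqr_ge0 (v ord0 i)) sum_eq0).
by move/eqP: sqr_vj_eq0; rewrite sqrf_eq0 => /eqP.
Qed.

Lemma eucl_normZ (c : R) (v : 'rV[R]_n) : eucl_norm (c *: v) = `|c| * eucl_norm v.
Proof.
rewrite /eucl_norm; under eq_bigr do rewrite mxE exprMn.
by rewrite -mulr_sumr sqrtrM ?sqr_ge0 // sqrtr_sqr.
Qed.

Lemma continuous_eucl_dist (x : 'rV[R]_n) :
  continuous (fun y : 'rV[R]_n => eucl_norm (y - x)).
Proof.
have sum_cont : continuous (fun y : 'rV[R]_n => \sum_(i < n) (y - x) ord0 i ^+ 2).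
  apply: continuous_big; first exact: add_continuous.
  move=> i _ z.
  have subx_cont : {for z, continuous (fun y : 'rV[R]_n => y - x)}.
    have id_cont : {for z, continuous (@id 'rV[R]_n)} by [].
    have cst_cont : {for z, continuous (fun _ : 'rV[R]_n => x)}.
      exact: cst_continuous.
    exact: (continuousB id_cont cst_cont).
  have coord_cont := continuous_comp subx_cont (@coord_continuous R 1 n ord0 i (z - x)).
  under eq_fun do rewrite expr2.
  exact: (cvgM coord_cont coord_cont).
by move=> y; exact: continuous_comp (sum_cont y) (@sqrt_continuous R _).
Qed.

Lemma nearest_not_interior (C : set 'rV[R]_n) (x y : 'rV[R]_n) :
  (forall z, C z -> eucl_norm (y - x) <= eucl_norm (z - x)) -> y != x ->
  ~ interior C y.
Proof.
move=> y_min neyx /nbhs_ballP[e /= e_gt0 ball_in_C].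
set a := `|x - y|.
have a_gt0 : 0 < a by rewrite normr_gt0 subr_eq0 eq_sym.
set l := e / (2 * (a + e)).
have ae_gt0 : 0 < a + e by rewrite addr_gt0.
have l_gt0 : 0 < l by rewrite divr_gt0 // mulr_gt0.
have l_lt1 : l < 1 by rewrite /l ltr_pdivrMr ?mulr_gt0 // mul1r; lra.
have la_lt_e : l * a < e.
  by rewrite /l mulrAC ltr_pdivrMr ?mulr_gt0 // ltr_pM2l //; lra.
pose z := y + l *: (x - y).
have Cz : C z.
  apply: ball_in_C; rewrite -ball_normE /= /z opprD addrA subrr add0r normrN.
  by rewrite normrZ gtr0_norm.
have dist_gt0 : 0 < eucl_norm (y - x).
  rewrite lt_neqAle eucl_norm_ge0 andbT eq_sym; apply/eqP => /eucl_norm_eq0/eqP.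
  by rewrite subr_eq0 (negbTE neyx).
have := y_min z Cz.
have -> : z - x = (1 - l) *: (y - x).
  by rewrite /z scalerBl scale1r scalerBr; apply/rowP => i; rewrite !mxE; lra.
rewrite eucl_normZ gtr0_norm ?subr_gt0 //; nra.
Qed.

End EuclideanNorm.

Section Projection.
Variables (R : realType) (n : nat) (XR : set 'rV[R]_n).
Hypotheses (XR_neq0 : closure XR !=set0) (XR_compact : compact (closure XR)).

Lemma proj_clP (x : 'rV[R]_n) :
  closure XR (proj_cl XR x) /\
  forall z, closure XR z -> eucl_norm (proj_cl XR x - x) <= eucl_norm (z - x).
Proof.
pose nearest := [set y | closure XR y /\
  forall z, closure XR z -> eucl_norm (y - x) <= eucl_norm (z - x)].
apply: (@xgetPex _ 0 nearest).
have [c /set_mem XRc c_min] :=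
  EVT_min_rV XR_neq0 XR_compact (continuous_subspaceT (@continuous_eucl_dist R n x)).
by exists c; split=> // z /mem_set; exact: c_min.
Qed.

Lemma proj_cl_not_interior (x : 'rV[R]_n) :
  ~ interior XR x -> ~ interior XR (proj_cl XR x).
Proof.
have [_ proj_min] := proj_clP x.
have [->//|neqx] := eqVneq (proj_cl XR x) x.
move=> _; apply: nearest_not_interior neqx => z /subset_closure; exact: proj_min.
Qed.

Lemma proj_cl_boundary (x : 'rV[R]_n) :
  ~ interior XR x -> boundary XR (proj_cl XR x).
Proof. by move=> notint_x; split; [case: (proj_clP x)|exact: proj_cl_not_interior]. Qed.

End Projection.

Lemma indT (R : realType) n (P : Prop) (v : 'rV[R]_n) : P -> ind P v = v.
Proof. by move=> hP; rewrite /ind asboolT. Qed.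

Lemma indF (R : realType) n (P : Prop) (v : 'rV[R]_n) : ~ P -> ind P v = 0.
Proof. by move=> hP; rewrite /ind asboolF. Qed.

Section AuxiliaryProcess.
Variables (R : realType) (n : nat) (XR : set 'rV[R]_n) (T : nat).
Variable x : nat -> 'rV[R]_n.
Hypothesis interior_x0 : interior XR (x 0%N).
Let tau := tauR XR T x.

Lemma XRproc_before_tau s : tau_gt tau s -> XRproc XR T x s = x s.
Proof.
rewrite /XRproc -/tau => lt_s_tau; case: eqP => [->//|_].
by rewrite indT // indF ?addr0 // lt_s_tau.
Qed.

Lemma XRproc_after_tau k s :
  tau = Some k -> (k <= s)%N -> XRproc XR T x s = proj_cl XR (x k).
Proof.
rewrite /XRproc -/tau => tau_k leks; rewrite tau_k /= ltnNge leks /=.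
have [_ notint_k _] := tauR_Some tau_k.
have s_neq0 : s != 0%N.
  by apply: contraPneq notint_k => s0; move: leks; rewrite s0 leqn0 => /eqP->.
by rewrite (negbTE s_neq0) indF // indT ?add0r // (minn_idPl leks).
Qed.

Lemma XRproc_step_before_tau t : (t < T)%N -> tau_gt tau t ->
  XRproc XR T x t.+1 =
    if `[< interior XR (x t.+1) >] then x t.+1 else proj_cl XR (x t.+1).
Proof.
move=> lt_tT lt_t_tau; have [lt_t1_tau|] := boolP (tau_gt tau t.+1).
  rewrite XRproc_before_tau // asboolT //.
  exact: interior_before_tauR lt_t1_tau lt_tT.
move: lt_t_tau; rewrite /tau_gt; case tau_k : tau => [k|] //= lttk.
rewrite -leqNgt => lekt1.
have k_eq : k = t.+1 by apply/eqP; rewrite eqn_leq lekt1.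
rewrite k_eq in tau_k; have [_ notint_t1 _] := tauR_Some tau_k.
by rewrite (XRproc_after_tau tau_k (leqnn _)) asboolF.
Qed.

Lemma XRproc_frozen_after_tau t : ~~ tau_gt tau t ->
  exists k, ~ interior XR (x k) /\
    XRproc XR T x t = proj_cl XR (x k) /\ XRproc XR T x t.+1 = proj_cl XR (x k).
Proof.
rewrite /tau_gt; case tau_k : tau => [k|] //=; rewrite -leqNgt => lekt.
have [_ notint_k _] := tauR_Some tau_k.
exists k; split; last split; first exact: notint_k.
  exact: XRproc_after_tau tau_k lekt.
exact: XRproc_after_tau tau_k (leqW lekt).
Qed.

End AuxiliaryProcess.

Theorem proposition1 (R : realType) (d p q r T : nat)
  (Xset XR : set 'rV[R]_d)
  (K : 'rV[R]_(d + p) -> 'rV[R]_r) (H : 'rV[R]_(r + q) -> 'rV[R]_d)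
  (Omega : Type)
  (X : nat -> Omega -> 'rV[R]_d) (a : nat -> Omega -> 'rV[R]_p)
  (eps : nat -> Omega -> 'rV[R]_q) :
  XR `<=` Xset ->
  bounded_eucl XR ->
  compact (closure XR) ->
  strictly_convex (closure XR) ->
  (forall w t, (t <= T)%N -> Xset (X t w)) ->
  (forall w, interior XR (X 0%N w)) ->
  (forall w t, (t < T)%N ->
     X t.+1 w = H (row_mx (K (row_mx (X t w) (a t w))) (eps t.+1 w))) ->
  forall w t, (t < T)%N ->
    let XRw := XRproc XR T (fun s => X s w) in
    XRw t.+1 =
      ind (boundary XR (XRw t)) (XRw t)
    + ind (interior XR (XRw t))
          (Htilde XR H (K (row_mx (XRw t) (a t w))) (eps t.+1 w)).
Proof.
(* Strict convexity only makes Q unique; any nearest point will do here. *)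
move=> _ _ XR_compact _ _ interior_X0 dynamics w t lt_tT XRw.
pose xw s := X s w.
have interior_xw0 : interior XR (xw 0%N) by exact: interior_X0 w.
have XR_neq0 : closure XR !=set0.
  by exists (xw 0%N); apply: subset_closure; exact: interior_subset interior_xw0.
have [lt_t_tau|ge_t_tau] := boolP (tau_gt (tauR XR T xw) t).
  have XRw_t : XRw t = xw t by exact: XRproc_before_tau.
  have interior_t : interior XR (xw t).
    exact: interior_before_tauR lt_t_tau (ltnW lt_tT).
  have not_boundary_t : ~ boundary XR (xw t) by case.
  rewrite XRw_t (indF _ not_boundary_t) (indT _ interior_t) add0r /Htilde.
  rewrite -(dynamics w t lt_tT).
  exact (XRproc_step_before_tau interior_xw0 lt_tT lt_t_tau).
have [k [notint_k [XRw_t XRw_t1]]] := XRproc_frozen_after_tau interior_xw0 ge_t_tau.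
rewrite /XRw XRw_t XRw_t1 (indT _ (proj_cl_boundary XR_neq0 XR_compact notint_k)).
by rewrite (indF _ (proj_cl_not_interior XR_neq0 XR_compact notint_k)) addr0.
Qed.
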